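(* Let $k \geq 2$ and let $\Sigma_k$ be an alphabet with $k$ letters. For $n \ge 0$ let $p_k(n)$ be the number of palstars of length $2n$ over $\Sigma_k$ and $u_k(n)$ the number of unbordered strings of length $n$ over $\Sigma_k$, and define the formal power series $P_k(X) = \sum_{n \geq 0} p_k(n) X^n$ and $U_k(X) = \sum_{n\geq 0} u_k(n) X^n$. Then $$P_k(X) = \frac{1}{2 - U_k(X)}.$$
   Context: Let $P = \{ x x^R : x \in \Sigma_k^+\}$ be the set of nonempty even-length palindromes over $\Sigma_k$ (here $x^R$ is the reversal of $x$). A palstar is an element of $P^* = \bigcup_{i\ge 0} P^i$, i.e. a (possibly empty) concatenation of nonempty even-length palindromes; the empty string is a palstar, so $p_k(0)=1$. A nonempty string $x$ is a border of a string $y$ if $x \neq y$ and $x$ is both a prefix and a suffix of $y$; $y$ is unbordered if it has no border (so the empty string is unbordered and $u_k(0)=1$). *)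

From mathcomp Require Import all_boot all_algebra.
From mathcomp Require Import boolp.
Set Implicit Arguments. Unset Strict Implicit. Unset Printing Implicit Defensive.
Import GRing.Theory.
Local Open Scope ring_scope.

Definition palstar (T : eqType) (s : seq T) : Prop :=
  exists xs : seq (seq T),
    all (fun x => x != [::]) xs /\ s = flatten [seq x ++ rev x | x <- xs].

Definition is_border (T : eqType) (x y : seq T) : Prop :=
  x != [::] /\ x != y /\ prefix x y /\ suffix x y.

Definition unbordered (T : eqType) (y : seq T) : Prop :=
  ~ (exists x, is_border x y).

Definition p_count (k n : nat) : nat :=
  #|[set w : (n.*2).-tuple 'I_k | `[< palstar (tval w) >]]|.

Definition u_count (k n : nat) : nat :=
  #|[set w : n.-tuple 'I_k | `[< unbordered (tval w) >]]|.

(* Formal power series over int, represented by coefficient sequences. *)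
Definition pser := nat -> int.
Definition pser_const (c : int) : pser := fun n => if n == 0%N then c else 0.
Definition pser_sub (f g : pser) : pser := fun n => f n - g n.
Definition pser_mul (f g : pser) : pser :=
  fun n => \sum_(i < n.+1) f i * g (n - i)%N.

Definition P_k (k : nat) : pser := fun n => (p_count k n)%:Z.
Definition U_k (k : nat) : pser := fun n => (u_count k n)%:Z.

From mathcomp Require Import all_boot all_algebra.
From mathcomp Require Import boolp.
From mathcomp Require Import zify.
Set Implicit Arguments. Unset Strict Implicit. Unset Printing Implicit Defensive.

(* A nonempty palstar factors uniquely as [p ++ w'] with [w'] a palstar and
   [p] its shortest nonempty even palindromic prefix; [p] is then a prime
   palindrome, i.e. an even palindrome with no even proper border, since the
   even borders of a palindrome are its even palindromic prefixes.  Hence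
   [p(n) = \sum_(1 <= m <= n) q(m) p(n - m)] where [q(m)] counts the prime
   palindromes of length [2m].
   Splitting a word [w] of length [m] at its shortest border [b], which is at
   most half as long as [w], writes [w = b ++ z ++ b] with [b] unbordered and
   [z] arbitrary, so [k^m = u(m) + \sum_(0 < 2j <= m) u(j) k^(m - 2j)];
   splitting the even palindromes of length [2m] at their shortest even
   border gives the same recurrence for [q], hence [q = u] and
   [p = 1 + p * (u - 1)], which is [P_k * (2 - U_k) = 1]. *)

Lemma size_eq_sum_count (X : eqType) (s : seq X) (f : X -> nat) N :
  (forall x, x \in s -> f x < N) ->
  size s = \sum_(j < N) count (fun x => f x == j) s.
Proof.
elim: s => [|x s IH] fs_lt /=; first by rewrite big1.
rewrite big_split /= -IH => [|y ys]; last by apply: fs_lt; rewrite inE ys orbT.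
have fx_lt : f x < N by apply: fs_lt; rewrite inE eqxx.
rewrite (bigD1 (Ordinal fx_lt)) //= eqxx big1 ?addn0 ?add1n // => i.
by case: (f x =P i) => // fx_i /eqP[]; apply: val_inj.
Qed.

Section Words.
Variable T : finType.

Fixpoint words (n : nat) : seq (seq T) :=
  if n is n'.+1 then [seq x :: w | x <- enum T, w <- words n'] else [:: [::]].

Lemma mem_words n w : (w \in words n) = (size w == n).
Proof.
elim: n w => [|n IH] [|x w] /=; rewrite ?inE //.
  by apply/allpairsP => -[[a b] /= [_ _]].
apply/allpairsP/idP => [[[a b] /= [_ b_in [_ ->]]] | w_size]; first by rewrite eqSS -IH.
by exists (x, w); rewrite /= mem_enum IH.
Qed.

Lemma uniq_words n : uniq (words n).
Proof.
elim: n => [|n IH] //=; apply: allpairs_uniq => //; first exact: enum_uniq.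
by move=> [a b] [c d] _ _ /= [-> ->].
Qed.

Lemma size_words n : size (words n) = #|T| ^ n.
Proof. by elim: n => [|n IH] //=; rewrite size_allpairs IH -cardE expnS. Qed.

Lemma card_tuple_count (P : pred (seq T)) n :
  #|[set w : n.-tuple T | P w]| = count P (words n).
Proof.
rewrite cardsE cardE /enum_mem size_filter -enumT.
rewrite (eq_count (a2 := P \o val)) // -count_map.
apply/permP/uniq_perm; [by rewrite map_inj_uniq ?enum_uniq //; apply: val_inj|
  exact: uniq_words|] => w.
rewrite mem_words; apply/mapP/idP => [[t _ ->]|/eqP w_size]; first by rewrite size_tuple.
by exists (Tuple (introT eqP w_size)); rewrite ?mem_enum.
Qed.

End Words.

Section Least.
Variable P : pred nat.

(* The least [i < n] satisfying [P], or [n] if there is none. *)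
Definition least n := find P (iota 0 n).

Lemma least_le n : least n <= n.
Proof. by rewrite /least -{2}(size_iota 0 n) find_size. Qed.

Lemma leastP n : least n < n -> P (least n).
Proof.
move=> lt_n; have has_P : has P (iota 0 n) by rewrite has_find size_iota.
by have := nth_find 0 has_P; rewrite nth_iota.
Qed.

Lemma least_minimal n i : i < least n -> ~~ P i.
Proof.
move=> lt_i; have := before_find 0 lt_i; rewrite nth_iota ?add0n => [->//|].
exact: leq_trans lt_i (least_le n).
Qed.

Lemma least_eq n j : j <= n -> (j < n -> P j) -> (forall i, i < j -> ~~ P i) ->
  least n = j.
Proof.
move=> le_j P_j minimal_j; apply/eqP; rewrite eqn_leq; apply/andP; split.
  case: (ltngtP j n) => [lt_j|gt_j|->]; [|lia|exact: least_le].
  by rewrite leqNgt; apply/negP => /least_minimal; rewrite P_j.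
rewrite leqNgt; apply/negP => lt_j.
by have := minimal_j _ lt_j; rewrite leastP // (leq_trans lt_j le_j).
Qed.

Lemma least_leq n i : i < n -> P i -> least n <= i.
Proof. by move=> lt_n P_i; rewrite leqNgt; apply/negP => /least_minimal; rewrite P_i. Qed.

End Least.

Section Borders.
Variable T : eqType.
Implicit Types w b z : seq T.

Definition borderb d w i := [&& 0 < i, d %| i & take i w == drop (size w - i) w].

(* The length of the shortest proper border of [w] whose length is a multiple
   of [d]; it is [size w] when there is none. *)
Definition min_border d w := least (borderb d w) (size w).

Lemma min_border_le d w : min_border d w <= size w.
Proof. exact: least_le. Qed.

Lemma min_border_borderb d w : min_border d w < size w -> borderb d w (min_border d w).
Proof. exact: leastP. Qed.

Lemma min_border_minimal d w i : i < min_border d w -> ~~ borderb d w i.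
Proof. exact: least_minimal. Qed.

Lemma dvdn_min_border d w : d %| size w -> d %| min_border d w.
Proof.
case: (ltnP (min_border d w) (size w)) => [lt_w _ | le_w].
  by case/and3P: (min_border_borderb lt_w).
by have -> : min_border d w = size w by apply/eqP; rewrite eqn_leq min_border_le.
Qed.

Lemma take_eq_dropP (x0 : T) w i : i <= size w ->
  reflect (forall t, t < i -> nth x0 w t = nth x0 w (size w - i + t))
          (take i w == drop (size w - i) w).
Proof.
move=> le_i; apply: (iffP eqP) => [e t lt_t | e].
  by rewrite -(nth_take x0 lt_t) e nth_drop.
apply: (eq_from_nth (x0 := x0)); first by rewrite size_drop size_takel //; lia.
by move=> t; rewrite size_takel // => lt_t; rewrite nth_take // nth_drop e.
Qed.

Lemma borderb_take d w j i : borderb d w j -> j <= size w -> i < j ->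
  borderb d w i = borderb d (take j w) i.
Proof.
case: w => [|x0 w']; first by rewrite /= leqn0 => _ /eqP ->.
set w := x0 :: w' => /and3P[_ _ take_j] le_j lt_i.
move/(take_eq_dropP x0 le_j): take_j => border_j.
rewrite /borderb; congr [&& _, _ & _].
have size_b : size (take j w) = j by rewrite size_takel.
have le_i_w : i <= size w by lia.
have le_i_b : i <= size (take j w) by rewrite size_b; lia.
apply/(take_eq_dropP x0 le_i_w)/(take_eq_dropP x0 le_i_b); rewrite size_b.
- move=> e t lt_t; rewrite !nth_take; try lia.
  by rewrite e // (border_j (j - i + t)); [congr nth|]; lia.
- move=> e t lt_t; move: (e t lt_t); rewrite !nth_take; try lia.
  by move=> ->; rewrite (border_j (j - i + t)); [congr nth|]; lia.
Qed.

(* Two overlapping copies of a border of length [j > |w|/2] produce a border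
   of length [2j - |w|], which is again a multiple of [d]. *)
Lemma min_border_half d w : d %| size w -> min_border d w < size w ->
  (min_border d w).*2 <= size w.
Proof.
case: w => [|x0 w'] //; set w := x0 :: w' => d_w lt_w; set j := min_border d w.
have := min_border_borderb lt_w.
rewrite /borderb -/j => /and3P[j_gt0 d_j /(take_eq_dropP x0 (ltnW lt_w)) border_j].
rewrite leqNgt; apply/negP => gt_w.
have /negP[] : ~~ borderb d w (j.*2 - size w) by apply: min_border_minimal; lia.
apply/and3P; split; first lia.
  by rewrite dvdn_sub // -muln2 dvdn_mulr.
have le_w : j.*2 - size w <= size w by lia.
apply/(take_eq_dropP x0 le_w) => t lt_t.
rewrite border_j; last lia.
by rewrite border_j; [congr nth|]; lia.
Qed.

Lemma min_border_factor d w j : d %| size w -> min_border d w = j -> j < size w ->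
  [/\ w = take j w ++ take (size w - j.*2) (drop j w) ++ take j w,
      min_border d (take j w) = j & d %| j].
Proof.
move=> d_w min_j lt_w; have := min_border_half d_w; rewrite min_j => /(_ lt_w) le_w.
have border_j : borderb d w j by rewrite -min_j min_border_borderb // min_j.
have /and3P[_ d_j /eqP take_j] := border_j.
split => //.
  rewrite -{1}(cat_take_drop j w); congr (_ ++ _).
  rewrite -{1}(cat_take_drop (size w - j.*2) (drop j w)) drop_drop take_j.
  by congr (_ ++ drop _ _); lia.
have size_b : size (take j w) = j by rewrite size_takel // ltnW.
apply: least_eq; rewrite ?size_b ?ltnn // => i lt_i.
rewrite -(borderb_take border_j (ltnW lt_w) lt_i).
by apply: min_border_minimal; rewrite min_j.
Qed.

Lemma min_border_sandwich d b z :
  0 < size b -> d %| size b -> min_border d b = size b ->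
  min_border d (b ++ z ++ b) = size b.
Proof.
move=> b_gt0 d_b prime_b; set w := b ++ z ++ b.
have size_w : size w = size b + size z + size b by rewrite !size_cat addnA.
have take_w : take (size b) w = b by rewrite take_size_cat.
have border_b : borderb d w (size b).
  rewrite /borderb b_gt0 d_b take_w size_w /w catA drop_size_cat ?eqxx // size_cat; lia.
apply: least_eq => [|//|i lt_i]; first lia.
rewrite (borderb_take border_b _ lt_i) ?take_w; last lia.
by apply: min_border_minimal; rewrite prime_b.
Qed.

Lemma sandwich_inj b b' z z' : size b = size b' ->
  b ++ z ++ b = b' ++ z' ++ b' -> b = b' /\ z = z'.
Proof.
move=> size_b /eqP; rewrite eqseq_cat // => /andP[/eqP eq_b]; rewrite -eq_b.
move=> e; have size_z : size z = size z'.
  by move/eqP/(congr1 size): e; rewrite !size_cat => /addIn.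
by move: e; rewrite eqseq_cat // => /andP[/eqP -> _].
Qed.

Lemma uniq_sandwiches (s t : seq (seq T)) n : uniq s -> uniq t ->
  {in s, forall b, size b = n} -> uniq [seq b ++ z ++ b | b <- s, z <- t].
Proof.
move=> uniq_s uniq_t size_s; apply: allpairs_uniq => // -[b z] [b' z'] /=.
move=> /allpairsP[[b1 z1] /= [b1_s _ [-> _]]] /allpairsP[[b2 z2] /= [b2_s _ [-> _]]].
by move/sandwich_inj => -[|-> ->]; rewrite ?size_s.
Qed.

Lemma uniq_cats (s t : seq (seq T)) n : uniq s -> uniq t ->
  {in s, forall b, size b = n} -> uniq [seq b ++ z | b <- s, z <- t].
Proof.
move=> uniq_s uniq_t size_s; apply: allpairs_uniq => // -[b z] [b' z'] /=.
move=> /allpairsP[[b1 z1] /= [b1_s _ [-> _]]] /allpairsP[[b2 z2] /= [b2_s _ [-> _]]].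
by move/eqP; rewrite eqseq_cat ?size_s // => /andP[/eqP -> /eqP ->].
Qed.

End Borders.

Section SandwichClosedLanguage.
Variables (T : finType) (lang : pred (seq T)).
Hypothesis lang_sandwichK : forall b z, lang (b ++ z ++ b) -> lang b && lang z.
Hypothesis lang_sandwich : forall b z, lang b -> lang z -> lang (b ++ z ++ b).

Local Notation lwords n := (filter lang (words T n)).
Local Notation n_prime d n := (count (fun w => min_border d w == size w) (lwords n)).

Lemma count_min_border_eq d n j : d %| n -> 0 < j -> d %| j -> j.*2 <= n ->
  count (fun w => min_border d w == j) (lwords n) =
  n_prime d j * size (lwords (n - j.*2)).
Proof.
move=> d_n j_gt0 d_j le_n; rewrite -!size_filter.
rewrite -(size_allpairs (fun b z => b ++ z ++ b)); apply/perm_size/uniq_perm.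
- by rewrite !filter_uniq // uniq_words.
- apply: (@uniq_sandwiches _ _ _ j); rewrite ?filter_uniq ?uniq_words // => b.
  by rewrite !mem_filter mem_words => /and3P[_ _ /eqP].
move=> w; rewrite !mem_filter mem_words; apply/idP/allpairsP.
- case/and3P => /eqP min_j lang_w /eqP size_w.
  have d_w : d %| size w by rewrite size_w.
  have lt_w : j < size w by lia.
  have [eq_w prime_b _] := min_border_factor d_w min_j lt_w.
  move: lang_w; rewrite eq_w => /lang_sandwichK /andP[lb lz].
  exists (take j w, take (size w - j.*2) (drop j w)); rewrite !mem_filter !mem_words lb lz.
  by rewrite !size_takel ?size_drop ?prime_b ?size_w ?eqxx //; lia.
- case=> -[b z] /=; rewrite !mem_filter !mem_words.
  case=> [/and3P[/eqP prime_b lb /eqP size_b] /andP[lz /eqP size_z] ->].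
  have min_w : min_border d (b ++ z ++ b) = j.
    by rewrite -size_b min_border_sandwich // size_b.
  by rewrite min_w eqxx lang_sandwich //= !size_cat size_b size_z; apply/eqP; lia.
Qed.

Lemma count_min_border_gt_half d n j : d %| n -> j < n -> n < j.*2 ->
  count (fun w => min_border d w == j) (lwords n) = 0.
Proof.
move=> d_n lt_n gt_n; apply/eqP; rewrite eqn0Ngt -has_count; apply/hasPn => w.
rewrite mem_filter mem_words => /andP[_ /eqP size_w]; apply/negP => /eqP min_j.
by have := @min_border_half _ d w; rewrite min_j size_w => /(_ d_n lt_n); lia.
Qed.

Lemma count_min_border0 d n : 0 < n ->
  count (fun w => min_border d w == 0) (lwords n) = 0.
Proof.
move=> n_gt0; apply/eqP; rewrite eqn0Ngt -has_count; apply/hasPn => w.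
rewrite mem_filter mem_words => /andP[_ /eqP size_w]; apply/negP => /eqP min_0.
by have /and3P[] : borderb d w 0 by rewrite -min_0 min_border_borderb // min_0 size_w.
Qed.

(* Classify the words of [lang] by the length [d * j] of their shortest border
   (of length a multiple of [d]); [j = n %/ d] collects the words without one. *)
Lemma size_lwords_rec d n : 0 < d -> d %| n -> 0 < n ->
  size (lwords n) = n_prime d n + \sum_(j < n %/ d)
    (if (0 < j) && ((d * j).*2 <= n)
     then n_prime d (d * j) * size (lwords (n - (d * j).*2)) else 0).
Proof.
move=> d_gt0 d_n n_gt0.
rewrite (@size_eq_sum_count _ _ (fun w => min_border d w %/ d) (n %/ d).+1); last first.
  move=> w; rewrite mem_filter mem_words => /andP[_ /eqP <-].
  by rewrite ltnS leq_div2r // min_border_le.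
have div_min j : count (fun w => min_border d w %/ d == j) (lwords n) =
                 count (fun w => min_border d w == d * j) (lwords n).
  apply: eq_in_count => w; rewrite mem_filter mem_words => /andP[_ /eqP size_w].
  have d_min : d %| min_border d w by rewrite dvdn_min_border // size_w.
  by rewrite -{2}(divnK d_min) [d * j]mulnC eqn_pmul2r.
rewrite big_ord_recr addnC div_min (mulnC d) divnK //; congr (_ + _).
  apply: eq_bigr => j _; rewrite div_min /=.
  have lt_n : d * j < n by rewrite mulnC -ltn_divRL.
  case: (posnP j) => [->|j_gt0] /=; first by rewrite muln0 count_min_border0.
  case: ifP => le_n; first by rewrite count_min_border_eq ?muln_gt0 ?d_gt0 ?dvdn_mulr.
  by rewrite count_min_border_gt_half //; lia.
apply: eq_in_count => w; rewrite mem_filter mem_words.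
by case/andP=> _ /eqP ->.
Qed.

End SandwichClosedLanguage.

Section Palindromes.
Variable T : eqType.
Implicit Types w b z : seq T.

Definition pal w := rev w == w.

Lemma pal_sandwichK b z : pal (b ++ z ++ b) -> pal b && pal z.
Proof.
rewrite /pal !rev_cat -catA => /eqP /sandwich_inj[]; first by rewrite size_rev.
by move=> -> ->; rewrite !eqxx.
Qed.

Lemma pal_sandwich b z : pal b -> pal z -> pal (b ++ z ++ b).
Proof. by rewrite /pal !rev_cat -catA => /eqP -> /eqP ->. Qed.

Lemma pal_even_split w : pal w -> ~~ odd (size w) ->
  w = take (size w)./2 w ++ rev (take (size w)./2 w).
Proof.
move=> /eqP pal_w even_w; set h := (size w)./2.
have size_w : size w = h + h.
  by move: (odd_double_half (size w)); rewrite (negbTE even_w) -addnn.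
rewrite -{1}(cat_take_drop h w); congr (_ ++ _).
by rewrite -{1}pal_w drop_rev size_w addnK.
Qed.

Lemma pal_drop b i : pal b -> i <= size b -> drop (size b - i) b = rev (take i b).
Proof. by move=> /eqP pal_b le_i; rewrite -{2}pal_b drop_rev subKn. Qed.

Definition even_pal_prefixb w i := [&& 0 < i, ~~ odd i & pal (take i w)].

Lemma pal_borderb2 b i : pal b -> i <= size b -> borderb 2 b i = even_pal_prefixb b i.
Proof.
move=> pal_b le_i; rewrite /borderb /even_pal_prefixb dvdn2 (pal_drop pal_b le_i).
rewrite /pal eq_sym.
by case: (0 < i).
Qed.

End Palindromes.

Arguments pal {T} w.

Section PalindromeCount.
Variable T : finType.

Lemma size_pal_words m : size (filter pal (words T m.*2)) = #|T| ^ m.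
Proof.
rewrite -(size_words T m) -(size_map (fun x => x ++ rev x) (words T m)).
apply/perm_size/uniq_perm; first by rewrite filter_uniq // uniq_words.
  rewrite map_inj_in_uniq ?uniq_words // => x y; rewrite !mem_words => /eqP sx /eqP sy.
  by move/eqP; rewrite eqseq_cat ?sx ?sy // => /andP[/eqP].
move=> w; rewrite mem_filter mem_words; apply/andP/mapP => [[pal_w /eqP size_w]|].
  exists (take (size w)./2 w); last by rewrite -pal_even_split // size_w odd_double.
  by rewrite mem_words size_takel size_w ?doubleK // -addnn leq_addr.
case=> x; rewrite mem_words => /eqP size_x ->.
by rewrite /pal rev_cat revK size_cat size_rev size_x addnn.
Qed.

Definition n_unbordered m := count (fun w => min_border 1 w == size w) (words T m).

Definition n_prime_pal m :=
  count (fun w => min_border 2 w == size w) (filter pal (words T m.*2)).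

End PalindromeCount.

Definition border_rec (X : nat -> nat) K := forall m, 0 < m ->
  K ^ m = X m + \sum_(j < m) (if (0 < j) && (j.*2 <= m) then X j * K ^ (m - j.*2) else 0).

Lemma border_rec_uniq X Y K : border_rec X K -> border_rec Y K -> X 0 = Y 0 ->
  X =1 Y.
Proof.
move=> rec_X rec_Y XY0; elim/ltn_ind => -[//|m] IH.
have sum_XY : \sum_(j < m.+1) (if (0 < j) && (j.*2 <= m.+1) then X j * K ^ (m.+1 - j.*2) else 0)
            = \sum_(j < m.+1) (if (0 < j) && (j.*2 <= m.+1) then Y j * K ^ (m.+1 - j.*2) else 0).
  by apply: eq_bigr => j _; rewrite IH.
by have := rec_X m.+1 isT; rewrite sum_XY rec_Y // => /addIn ->.
Qed.

Section Recurrences.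
Variable T : finType.

Lemma n_unbordered_rec : border_rec (n_unbordered T) #|T|.
Proof.
move=> m m_gt0; rewrite -(size_words T m) -(filter_predT (words T m)).
rewrite (@size_lwords_rec _ predT (fun _ _ _ => isT) (fun _ _ _ _ => isT) 1) //.
rewrite divn1 /n_unbordered filter_predT.
congr (_ + _); apply: eq_bigr => j _; rewrite mul1n.
by case: ifP => // _; rewrite !filter_predT size_words.
Qed.

Lemma n_prime_pal_rec : border_rec (n_prime_pal T) #|T|.
Proof.
move=> m m_gt0; rewrite -(size_pal_words T m).
rewrite (@size_lwords_rec _ _ (@pal_sandwichK T) (@pal_sandwich T) 2)
  ?dvdn2 ?odd_double ?double_gt0 //.
have -> : m.*2 %/ 2 = m by rewrite -muln2 mulnK.
congr (_ + _); apply: eq_bigr => j _.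
by rewrite mul2n leq_double -doubleB size_pal_words.
Qed.

Lemma n_prime_pal_unbordered : n_prime_pal T =1 n_unbordered T.
Proof. exact: border_rec_uniq n_prime_pal_rec n_unbordered_rec _. Qed.

End Recurrences.

Section Palstars.
Variable T : eqType.
Implicit Types w b y z : seq T.

(* The length of the shortest nonempty even palindromic prefix of [w], or
   [size w + 1] if there is none. *)
Definition min_pal_prefix w := least (even_pal_prefixb w) (size w).+1.

Lemma min_pal_prefixP w :
  min_pal_prefix w <= size w -> even_pal_prefixb w (min_pal_prefix w).
Proof. by move=> le_w; apply: leastP; rewrite ltnS. Qed.

Lemma palstar_nil : palstar ([::] : seq T).
Proof. by exists [::]. Qed.

Lemma palstar_cat w1 w2 : palstar w1 -> palstar w2 -> palstar (w1 ++ w2).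
Proof.
case=> xs [xs_nil ->] [ys [ys_nil ->]]; exists (xs ++ ys).
by rewrite all_cat xs_nil ys_nil map_cat flatten_cat.
Qed.

Lemma palstar_pal z : pal z -> ~~ odd (size z) -> palstar z.
Proof.
move=> pal_z even_z; rewrite (pal_even_split pal_z even_z); set x := take _ z.
have [->|x_nil] := eqVneq x [::]; first exact: palstar_nil.
by exists [:: x]; rewrite /= x_nil cats0.
Qed.

Lemma palstar_consP w : palstar w -> w != [::] ->
  exists x rest, [/\ x != [::], w = (x ++ rev x) ++ rest & palstar rest].
Proof.
case=> -[|x xs] [] /= => [_ -> //|/andP[x_nil xs_nil] -> _].
by exists x, (flatten [seq y ++ rev y | y <- xs]); split => //; exists xs.
Qed.

Lemma even_pal_prefixb_catr y z i :
  i <= size y -> even_pal_prefixb (y ++ z) i = even_pal_prefixb y i.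
Proof. by move=> le_i; rewrite /even_pal_prefixb takel_cat. Qed.

Lemma min_pal_prefix_catr y z :
  min_pal_prefix y <= size y -> min_pal_prefix (y ++ z) = min_pal_prefix y.
Proof.
move=> le_y; apply: least_eq => [|_|i lt_i]; rewrite ?even_pal_prefixb_catr //.
- by rewrite size_cat; lia.
- exact: min_pal_prefixP.
- exact: least_minimal lt_i.
- exact: leq_trans (ltnW lt_i) le_y.
Qed.

Lemma min_border_min_pal_prefix w : min_pal_prefix w <= size w ->
  min_border 2 (take (min_pal_prefix w) w) = min_pal_prefix w.
Proof.
move=> le_w; have /and3P[_ _ pal_j] := min_pal_prefixP le_w.
set j := min_pal_prefix w in le_w pal_j *.
have size_j : size (take j w) = j by rewrite size_takel.
apply: least_eq; rewrite ?size_j ?ltnn // => i lt_i.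
have le_i := ltnW lt_i.
rewrite pal_borderb2 ?size_j // /even_pal_prefixb take_takel //.
exact: least_minimal lt_i.
Qed.

(* For an even palindrome, the shortest even palindromic prefix [b] is also its
   shortest even border, so the palindrome factors as [b ++ z ++ b]. *)
Lemma palstar_drop_min_pal_prefix y : pal y -> ~~ odd (size y) ->
  palstar (drop (min_pal_prefix y) y).
Proof.
move=> pal_y even_y; set j := min_pal_prefix y.
have [lt_y|le_j] := ltnP j (size y); last by rewrite drop_oversize //; apply: palstar_nil.
have min_j : min_border 2 y = j.
  apply: least_eq => [|_|i lt_i]; first exact: ltnW.
    by rewrite pal_borderb2 ?(ltnW lt_y) //; apply/min_pal_prefixP/ltnW.
  by rewrite pal_borderb2 //; [exact: least_minimal lt_i | lia].
have d_y : 2 %| size y by rewrite dvdn2.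
have [eq_y _ d_j] := min_border_factor d_y min_j lt_y.
set b := take j y in eq_y; set z := take _ (drop j y) in eq_y.
have size_b : size b = j by rewrite size_takel // ltnW.
have size_z : size z = size y - j.*2 by rewrite size_takel // size_drop; lia.
have /pal_sandwichK /andP[pal_b pal_z] : pal (b ++ z ++ b) by rewrite -eq_y.
have -> : drop j y = z ++ b by rewrite {1}eq_y drop_size_cat.
apply: palstar_cat; apply: palstar_pal; rewrite ?size_z ?size_b -?dvdn2 //.
by rewrite dvdn_sub // -muln2 dvdn_mull.
Qed.

Lemma palstar_factor w : palstar w -> w != [::] ->
  min_pal_prefix w <= size w /\ palstar (drop (min_pal_prefix w) w).
Proof.
move=> palstar_w w_nil.
have [x [rest [x_nil eq_w palstar_rest]]] := palstar_consP palstar_w w_nil.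
set y := x ++ rev x in eq_w.
have pal_y : pal y by rewrite /pal /y rev_cat revK.
have even_y : ~~ odd (size y) by rewrite size_cat size_rev addnn odd_double.
have le_y : min_pal_prefix y <= size y.
  apply: least_leq => //; rewrite /even_pal_prefixb take_size pal_y even_y !andbT.
  by rewrite /y size_cat size_rev addnn double_gt0 lt0n size_eq0.
subst w; rewrite min_pal_prefix_catr // drop_cat; split; first by rewrite size_cat; lia.
case: ifP => [_|]; first exact: palstar_cat (palstar_drop_min_pal_prefix pal_y even_y) _.
by rewrite ltn_neqAle le_y andbT => /negbFE/eqP ->; rewrite subnn drop0.
Qed.

Lemma min_pal_prefix_prime b z : pal b -> ~~ odd (size b) -> 0 < size b ->
  min_border 2 b = size b -> min_pal_prefix (b ++ z) = size b.
Proof.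
move=> pal_b even_b b_gt0 prime_b; apply: least_eq => [|_|i lt_i].
- by rewrite size_cat; lia.
- by rewrite /even_pal_prefixb take_size_cat // b_gt0 even_b.
have le_i := ltnW lt_i.
rewrite even_pal_prefixb_catr // -pal_borderb2 //.
by apply: min_border_minimal; rewrite prime_b.
Qed.

End Palstars.

Section PalstarCount.
Variable T : finType.

Local Notation palstars n := [seq w <- words T n | `[< palstar w >]].

Definition n_palstar n := count (fun w : seq T => `[< palstar w >]) (words T n.*2).

Lemma count_min_pal_prefix n m : 0 < m -> m <= n ->
  count (fun w => min_pal_prefix w == m.*2) (palstars n.*2) =
  n_prime_pal T m * n_palstar (n - m).
Proof.
move=> m_gt0 le_n; rewrite /n_palstar /n_prime_pal -!size_filter -(size_allpairs cat).
apply/perm_size/uniq_perm.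
- by rewrite !filter_uniq // uniq_words.
- apply: (@uniq_cats _ _ _ m.*2); rewrite ?filter_uniq ?uniq_words // => b.
  by rewrite !mem_filter mem_words => /and3P[_ _ /eqP].
move=> w; rewrite !mem_filter mem_words; apply/idP/allpairsP.
- case/and3P => /eqP min_w /asboolP palstar_w /eqP size_w.
  have w_nil : w != [::] by rewrite -size_eq0 size_w double_eq0 -lt0n; lia.
  have [le_w palstar_rest] := palstar_factor palstar_w w_nil.
  have prime_b := min_border_min_pal_prefix le_w.
  have /and3P[_ _ pal_b] := min_pal_prefixP le_w.
  rewrite min_w in le_w palstar_rest prime_b pal_b.
  exists (take m.*2 w, drop m.*2 w); rewrite /= cat_take_drop !mem_filter !mem_words.
  by rewrite size_takel // size_drop size_w -doubleB prime_b pal_b !eqxx asboolT.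
- case=> -[b z] /=; rewrite !mem_filter !mem_words.
  case=> [/and3P[/eqP prime_b pal_b /eqP size_b] /andP[/asboolP palstar_z /eqP size_z] ->].
  have even_b : ~~ odd (size b) by rewrite size_b odd_double.
  have b_gt0 : 0 < size b by rewrite size_b double_gt0.
  rewrite min_pal_prefix_prime // size_cat size_b size_z -doubleD subnKC // !eqxx andbT.
  by apply/asboolP/palstar_cat => //; apply: palstar_pal.
Qed.

Lemma n_palstar_rec n : 0 < n ->
  n_palstar n = \sum_(i < n) n_prime_pal T i.+1 * n_palstar (n - i.+1).
Proof.
move=> n_gt0; rewrite {1}/n_palstar -size_filter.
have min_even w : w \in palstars n.*2 ->
    [/\ min_pal_prefix w <= n.*2, 0 < min_pal_prefix w
       & (min_pal_prefix w)./2.*2 = min_pal_prefix w].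
  rewrite mem_filter mem_words => /andP[/asboolP palstar_w /eqP size_w].
  have w_nil : w != [::] by rewrite -size_eq0 size_w double_eq0 -lt0n.
  have [le_w _] := palstar_factor palstar_w w_nil.
  case/and3P: (min_pal_prefixP le_w) => j_gt0 even_j _.
  by rewrite halfK (negbTE even_j) subn0 -size_w.
rewrite (@size_eq_sum_count _ _ (fun w => (min_pal_prefix w)./2.-1) n); last first.
  by move=> w /min_even[]; lia.
apply: eq_bigr => i _; rewrite -count_min_pal_prefix //.
by apply: eq_in_count => w /min_even[_ j_gt0 even_j]; apply/eqP/eqP; lia.
Qed.

Lemma n_palstar_conv n : 0 < n ->
  \sum_(i < n) n_palstar i * n_unbordered T (n - i) = n_palstar n.
Proof.
move=> n_gt0; rewrite n_palstar_rec // (reindex_inj rev_ord_inj) /=.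
apply: eq_bigr => i _; rewrite mulnC n_prime_pal_unbordered.
by have -> : n - (n - i.+1) = i.+1 by have := ltn_ord i; lia.
Qed.

End PalstarCount.

Lemma unborderedE (T : eqType) (w : seq T) :
  `[< unbordered w >] = (min_border 1 w == size w).
Proof.
apply/asboolP/eqP => [unbordered_w | min_w].
  apply: least_eq => [//|/[!ltnn]//|i lt_i]; apply/negP => /and3P[i_gt0 _ /eqP take_i].
  have size_i : size (take i w) = i by rewrite size_takel // ltnW.
  apply: unbordered_w; exists (take i w); rewrite /is_border prefixE suffixE size_i.
  split; first by rewrite -size_eq0 size_i -lt0n.
  split; last by rewrite take_i !eqxx.
  by apply/negP => /eqP/(congr1 size); rewrite size_i; lia.
case=> x [x_nil [x_w]]; rewrite prefixE suffixE => -[/eqP take_x /eqP drop_x].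
have lt_w : size x < size w.
  rewrite ltn_neqAle -{2}take_x size_take_min geq_minr andbT.
  by apply: contraNneq x_w => eq_x; rewrite -take_x eq_x take_size.
have := @min_border_minimal _ 1 w (size x); rewrite min_w => /(_ lt_w).
by rewrite /borderb lt0n size_eq0 x_nil dvd1n take_x drop_x eqxx.
Qed.

Lemma p_count_palstar k n : p_count k n = n_palstar 'I_k n.
Proof. exact: card_tuple_count. Qed.

Lemma u_count_unbordered k n : u_count k n = n_unbordered 'I_k n.
Proof.
rewrite /u_count (card_tuple_count (fun w => `[< unbordered w >])).
by apply: eq_count => w; rewrite unborderedE.
Qed.

Import GRing.Theory.
Local Open Scope ring_scope.

Theorem theorem2 (k : nat) (hk : (2 <= k)%N) :
  pser_mul (P_k k) (pser_sub (pser_const 2) (U_k k)) = pser_const 1.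
Proof.
apply: funext => n; rewrite /pser_mul /pser_sub /pser_const /P_k /U_k.
rewrite big_ord_recr /= subnn u_count_unbordered /= mulr1.
have -> : \sum_(i < n) (p_count k i)%:Z *
            ((if (n - i)%N == 0%N then 2 else 0) - (u_count k (n - i))%:Z)
        = - (\sum_(i < n) n_palstar 'I_k i * n_unbordered 'I_k (n - i))%N%:Z.
  rewrite -natz natr_sum -sumrN; apply: eq_bigr => i _.
  rewrite subn_eq0 leqNgt ltn_ord p_count_palstar u_count_unbordered.
  by rewrite natz PoszM sub0r mulrN.
have [->|n_gt0] := posnP n; last by rewrite n_palstar_conv // p_count_palstar addNr.
by rewrite big_ord0 p_count_palstar /n_palstar /= asboolT //; apply: palstar_nil.
Qed.
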